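(* Let $A\subseteq\mathcal{T}_n\setminus\mathcal{S}_n$. The following are equivalent: (1) $A$ is independent; (2) for all distinct $a,b\in A$ there is no $g\in\mathcal{S}_n$ such that $\ker(a)g\subseteq\ker(b)$.
   Context: $\Omega=\{1,\ldots,n\}$, $\mathcal{T}_n$ is the monoid of all maps $\Omega\to\Omega$, $\mathcal{S}_n$ the symmetric group. A set $A\subseteq\mathcal{T}_n\setminus\mathcal{S}_n$ is independent if for all distinct $a,b\in A$ we have $a\notin\langle b,\mathcal{S}_n\rangle$. $\ker(a)=\{(x,y)\in\Omega\times\Omega: xa=ya\}$, and for $g\in\mathcal{S}_n$, $\ker(a)g=\{(xg,yg):(x,y)\in\ker(a)\}$; inclusion is inclusion of relations. *)

From mathcomp Require Import all_boot all_fingroup.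
Set Implicit Arguments. Unset Strict Implicit. Unset Printing Implicit Defensive.

(* T_n = maps Omega -> Omega with Omega = 'I_n; maps act on the right: x a. *)
Definition tmap (n : nat) := {ffun 'I_n -> 'I_n}.

(* product in T_n with right actions: x (a b) = (x a) b *)
Definition tmul n (a b : tmap n) : tmap n := [ffun x => b (a x)].
Definition tid n : tmap n := [ffun x => x].

Definition in_Sn n (a : tmap n) : bool := injectiveb a.

Inductive in_gen n (X : tmap n -> Prop) : tmap n -> Prop :=
| gen_id : in_gen X (tid n)
| gen_mul (a x : tmap n) : in_gen X a -> X x -> in_gen X (tmul a x).

Definition in_gen_Sn n (b a : tmap n) : Prop :=
  in_gen (fun x => x = b \/ in_Sn x) a.

Definition independent n (A : {set tmap n}) : Prop :=
  forall a b, a \in A -> b \in A -> a != b -> ~ in_gen_Sn b a.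

Definition tker n (a : tmap n) : {set 'I_n * 'I_n} :=
  [set p | a p.1 == a p.2].

Definition ker_perm n (a : tmap n) (g : {perm 'I_n}) : {set 'I_n * 'I_n} :=
  [set (g p.1, g p.2) | p in tker a].

From mathcomp Require Import all_boot all_fingroup.
From mathcomp Require Import zify.
Set Implicit Arguments. Unset Strict Implicit. Unset Printing Implicit Defensive.

(* Every element of <b, S_n> outside S_n has the form g b h with g a
   permutation, so its kernel contains a permuted copy of ker b.  Conversely,
   if a is not a permutation, then a h lies in <a, S_n> for every h: when h is
   injective on im a, h agrees there with a permutation; otherwise a fibre of a
   of size two lets one write a h = (a h1)(a h2) with h1 injective on im a and
   h2 taking one more value than h on im a.  A map c with ker(a) g contained
   in ker(c) is of the form g^-1 a h, hence lies in <a, S_n>. *)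

Lemma perm_extend (T : finType) (A : {pred T}) (f : T -> T) :
  {in A &, injective f} -> exists p : {perm T}, {in A, p =1 f}.
Proof.
suff perm_extend_seq (s : seq T) :
    {in s &, injective f} -> exists p : {perm T}, {in s, p =1 f}.
  move=> f_inj; have [|p pE] := perm_extend_seq (enum A).
    by move=> x y; rewrite !mem_enum; apply: f_inj.
  by exists p => x xA; apply: pE; rewrite mem_enum.
elim: s => [|x s IHs] f_inj; first by exists 1%g.
have [|p pE] := IHs; first by move=> y z ys zs; apply: f_inj; rewrite inE ?ys ?zs orbT.
exists (p * tperm (p x) (f x))%g => y; rewrite inE permM.
case: (eqVneq y x) => [-> _ | yx /= ys]; first by rewrite tpermL.
have fyx : f y != f x.
  by apply: contra_neq yx => /f_inj; apply; rewrite inE ?ys ?eqxx ?orbT.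
rewrite (pE y ys) tpermD //; first by rewrite -(pE y ys) (inj_eq perm_inj) eq_sym.
by rewrite eq_sym.
Qed.

Lemma in_gen_tmul n (X : tmap n -> Prop) c d :
  in_gen X c -> in_gen X d -> in_gen X (tmul c d).
Proof.
move=> Xc; elim=> [|d' x _ IHd Xx].
  by have -> : tmul c (tid n) = c by apply/ffunP=> i; rewrite !ffunE.
have -> : tmul c (tmul d' x) = tmul (tmul c d') x by apply/ffunP=> i; rewrite !ffunE.
exact: gen_mul.
Qed.

Lemma in_gen_Sn_generator n (b c : tmap n) : c = b \/ in_Sn c -> in_gen_Sn b c.
Proof.
move=> Xc; have -> : c = tmul (tid n) c by apply/ffunP=> i; rewrite !ffunE.
exact: gen_mul (gen_id _) Xc.
Qed.

Definition perm_tmap n (g : {perm 'I_n}) : tmap n := [ffun x => g x].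

Lemma perm_tmap_Sn n (g : {perm 'I_n}) : in_Sn (perm_tmap g).
Proof. by apply/injectiveP => x y; rewrite !ffunE; apply: perm_inj. Qed.

Definition timg n (a : tmap n) : {set 'I_n} := [set a x | x : 'I_n].

Lemma timg_f n (a : tmap n) x : a x \in timg a.
Proof. exact: imset_f. Qed.

Lemma in_gen_Sn_inj_timg n (a h : tmap n) :
  {in timg a &, injective h} -> in_gen_Sn a (tmul a h).
Proof.
case/perm_extend => p pE.
have -> : tmul a h = tmul a (perm_tmap p).
  by apply/ffunP=> i; rewrite !ffunE pE ?timg_f.
apply: in_gen_tmul; apply: in_gen_Sn_generator; [left | right] => //.
exact: perm_tmap_Sn.
Qed.

Section Collapse.

Variables (n : nat) (a : tmap n) (u v : 'I_n).
Hypotheses (neq_uv : u != v) (auv : a u = a v).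

Let I := timg a.

Lemma section_avoiding :
  exists s : 'I_n -> 'I_n, {in I, cancel s a} /\ forall i, s i != v.
Proof.
exists (fun i => odflt u [pick w | (a w == i) && (w != v)]); split=> [i|i].
  case/imsetP=> w _ ->; case: pickP => [w' /andP[/eqP //] | /= noW].
  by case: (eqVneq w v) (noW w) => [-> // | _]; rewrite eqxx.
by case: pickP => [w /andP[] | _] //=.
Qed.

(* a h1 maps y to a v = a u and is otherwise the transposition tau exchanging
   x and a u, so h2 := h tau, redefined as z at tau y, satisfies h = (a h1)(a h2)
   on the image of a. *)
Lemma tmul_collapse (h : tmap n) x y z :
  x \in I -> y \in I -> x != y -> h x = h y -> z \notin h @: I ->
  exists h1 h2 : tmap n, [/\ {in I &, injective h1},
    #|h @: I| < #|h2 @: I| & tmul a h = tmul (tmul a h1) (tmul a h2)].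
Proof.
move=> xI yI neq_xy hxy zNhI.
have [s [sK sNv]] := section_avoiding.
pose tau := tperm x (a u).
have tauI i : i \in I -> tau i \in I.
  by rewrite /tau; case: tpermP => // _ _; exact: timg_f.
have tauy : tau y != a u by rewrite -(tpermL x (a u)) (inj_eq perm_inj) eq_sym.
pose h1 : tmap n := [ffun i => if i == y then v else s (tau i)].
pose h2 : tmap n := [ffun j => if j == tau y then z else h (tau j)].
have h2ah1 i : i \in I -> h2 (a (h1 i)) = h i.
  move=> iI; rewrite !ffunE; case: (eqVneq i y) => [-> | iy].
    by rewrite -auv eq_sym (negbTE tauy) tpermR hxy.
  by rewrite sK ?tauI // (inj_eq perm_inj) (negbTE iy) tpermK.
exists h1, h2; split.
- move=> i j iI jI; rewrite !ffunE.
  case: (eqVneq i y) => [-> | iy]; case: (eqVneq j y) => [-> | jy] //.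
  + by move=> vs; move: (sNv (tau j)); rewrite -vs eqxx.
  + by move=> sv; move: (sNv (tau i)); rewrite sv eqxx.
  by move=> /(congr1 a); rewrite !sK ?tauI //; apply: perm_inj.
- apply: leq_trans (subset_leq_card (_ : z |: h @: I \subset h2 @: I)).
    by rewrite cardsU1 zNhI.
  apply/subsetP => w; rewrite in_setU1 => /predU1P[-> | /imsetP[i iI ->]].
    by apply/imsetP; exists (tau y); rewrite ?tauI // ffunE eqxx.
  by apply/imsetP; exists (a (h1 i)); rewrite ?timg_f ?h2ah1.
- by apply/ffunP => w; rewrite [LHS]ffunE -h2ah1 ?timg_f // !ffunE.
Qed.

End Collapse.

Lemma in_gen_Sn_tmul n (a h : tmap n) : ~~ in_Sn a -> in_gen_Sn a (tmul a h).
Proof.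
case/injectivePn => u [v neq_uv auv]; set I := timg a.
move: {2}(#|I| - #|h @: I|) (leqnn (#|I| - #|h @: I|)) => k.
elim: k h => [|k IHk] h defect.
  apply/in_gen_Sn_inj_timg/imset_injP.
  by rewrite eqn_leq leq_imset_card /= -subn_eq0 -leqn0.
have [/dinjectiveP h_inj | /dinjectivePn[x xI [y /andP[/= + yI] hxy]]] :=
  boolP (dinjectiveb h I); first exact: in_gen_Sn_inj_timg.
rewrite eq_sym => neq_xy.
have lt_hI : #|h @: I| < #|I|.
  rewrite ltn_neqAle leq_imset_card andbT.
  by apply/imset_injP => /(_ x y xI yI hxy) /eqP; rewrite (negbTE neq_xy).
have [z zNhI] : exists z, z \notin h @: I.
  have /card_gt0P[z] : 0 < #|~: (h @: I)|.
    by move: (cardsC (h @: I)) (max_card I); rewrite !card_ord; lia.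
  by rewrite inE; exists z.
have [h1 [h2 [h1_inj lt_h_h2 ->]]] := tmul_collapse neq_uv auv xI yI neq_xy hxy zNhI.
apply: in_gen_tmul; apply: IHk.
- by move/imset_injP/eqP: h1_inj ->; rewrite subnn.
- by move: lt_h_h2 (leq_imset_card h2 I); rewrite -/I; lia.
Qed.

Lemma ker_perm_subsetP n (a b : tmap n) (g : {perm 'I_n}) :
  reflect (forall x y, a x = a y -> b (g x) = b (g y))
          (ker_perm a g \subset tker b).
Proof.
apply: (iffP subsetP) => [kerS x y axy | kerS _ /imsetP[[x y] + ->]].
  have /kerS : (g x, g y) \in ker_perm a g.
    by apply/imsetP; exists (x, y); rewrite ?inE ?axy.
  by rewrite inE => /eqP.
by rewrite !inE => /eqP /kerS ->.
Qed.

Lemma factor_through_kernel n (a : tmap n) (c : 'I_n -> 'I_n) :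
  (forall x y, a x = a y -> c x = c y) -> exists h : tmap n, forall x, h (a x) = c x.
Proof.
move=> kerc; exists [ffun i => c (odflt i [pick w | a w == i])] => x.
by rewrite ffunE; case: pickP => [w /eqP /kerc // | /(_ x)]; rewrite eqxx.
Qed.

Lemma in_gen_Sn_kernel n (b c : tmap n) : in_gen_Sn b c ->
  in_Sn c \/ exists g : {perm 'I_n}, forall x y, b x = b y -> c (g x) = c (g y).
Proof.
elim=> [|c' x _ [/injectiveP c'_inj | [g kerS]] genx].
- by left; apply/injectiveP => i j; rewrite !ffunE.
- case: genx => [-> | /injectiveP x_inj].
    right; exists (perm c'_inj)^-1%g => i j bij.
    by rewrite !ffunE -[c' _]permE -[c' (_ j)]permE !permKV.
  by left; apply/injectiveP => i j; rewrite !ffunE => /x_inj /c'_inj.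
- by right; exists g => i j /kerS; rewrite !ffunE => ->.
Qed.

Theorem lemma8p3 (n : nat) (A : {set tmap n}) :
  (forall a, a \in A -> ~~ in_Sn a) ->
  (independent A <->
   (forall a b, a \in A -> b \in A -> a != b ->
      ~ exists g : {perm 'I_n}, ker_perm a g \subset tker b)).
Proof.
move=> nSA; split=> [indA a b aA bA neq_ab [g /ker_perm_subsetP kerS] |
                     noKerS a b aA bA neq_ab gen_b_a].
  apply: (indA b a bA aA); first by rewrite eq_sym.
  have [h hE] := factor_through_kernel kerS.
  have -> : b = tmul (perm_tmap g^-1) (tmul a h).
    by apply/ffunP => x; rewrite !ffunE hE permKV.
  apply: in_gen_tmul (in_gen_Sn_tmul _ (nSA a aA)).
  by apply: in_gen_Sn_generator; right; apply: perm_tmap_Sn.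
apply: (noKerS b a bA aA); first by rewrite eq_sym.
case: (in_gen_Sn_kernel gen_b_a) => [Sa | [g kerS]].
  by move: (nSA a aA); rewrite Sa.
by exists g; apply/ker_perm_subsetP.
Qed.
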